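(* Let $G=(V,E)$ be a simple undirected graph with $V=\{0,1,\dots,n-1\}$, and let $P\ge 1$ be an integer (the number of processors). Run the space-efficient parallel triangle-counting algorithm (described in the context) on $G$ with $P$ processors. Then the value $T=\sum_{i=0}^{P-1}T_i$ returned by the algorithm equals the exact number of triangles in $G$.
   Context: A triangle in $G$ is a set of three nodes $\{u,v,w\}$ such that $(u,v),(v,w),(w,u)\in E$. For $v\in V$ let $d_v$ be its degree. Define the total order $\prec$ on $V$ by $u\prec v$ iff $d_u<d_v$, or $d_u=d_v$ and $u<v$. For each $v\in V$ let $N_v=\{u: (u,v)\in E,\ v\prec u\}$ (the neighbors of $v$ that are higher in the order $\prec$), stored as a list sorted in ascending order. The algorithm: the node set $V$ is partitioned into $P$ pairwise disjoint sets $V_0,\dots,V_{P-1}$, each consisting of consecutive node labels, with $\bigcup_k V_k=V$. Processor $i$ stores $N_v$ for all $v\in V_i$ and maintains a counter $T_i$, initially $0$. For each $v\in V_i$ and each $u\in N_v$: if $u\in V_i$, processor $i$ adds $|N_v\cap N_u|$ to $T_i$; if $u\in V_j$ with $j\neq i$, processor $i$ sends the list $N_v$ to processor $j$, unless it has already sent $N_v$ to processor $j$ (so for each $v$, $N_v$ is sent at most once to each other processor). Whenever a processor $j$ receives a list $X$ (i.e. $X=N_v$ for some $v$ in another part), it adds $\sum_{u\in X,\ u\in V_j}|N_u\cap X|$ to $T_j$. Every processor processes all messages sent to it (processors broadcast completion notices and each waits until all others have completed and all messages are processed). Finally the algorithm returns $T=\sum_i T_i$. *)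

From mathcomp Require Import all_boot all_order.
Set Implicit Arguments. Unset Strict Implicit. Unset Printing Implicit Defensive.

Section Triangles.
Variables (n P : nat) (e : rel 'I_n) (part : 'I_n -> 'I_P).

Definition simple_graph := symmetric e /\ irreflexive e.

(* part v = k  iff  v \in V_k ; each V_k consists of consecutive labels *)
Definition consecutive_parts :=
  forall u w v : 'I_n, u <= w -> w <= v -> part u = part v -> part w = part u.

Definition deg (v : 'I_n) : nat := #|[set u | e v u]|.

Definition prec (u v : 'I_n) : bool :=
  (deg u < deg v) || ((deg u == deg v) && (u < v)).

(* N_v, sorted ascending (enum 'I_n is ascending) *)
Definition Nb (v : 'I_n) : seq 'I_n := [seq u <- enum 'I_n | e v u && prec v u].

(* |X ∩ Y| for duplicate-free lists *)
Definition inter_size (X Y : seq 'I_n) : nat := count (fun w => w \in Y) X.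

(* state of processor i: (T_i, list of already sent (v, j), outbox of (j, N_v)) *)
Definition pstate := (nat * seq ('I_n * 'I_P) * seq ('I_P * seq 'I_n))%type.

Definition proc_step (i : 'I_P) (v : 'I_n) (st : pstate) (u : 'I_n) : pstate :=
  let: (Ti, sent, out) := st in
  if part u == i then (Ti + inter_size (Nb v) (Nb u), sent, out)
  else if (v, part u) \in sent then (Ti, sent, out)
  else (Ti, (v, part u) :: sent, (part u, Nb v) :: out).

Definition proc_run (i : 'I_P) : pstate :=
  foldl (fun st v => foldl (proc_step i v) st (Nb v))
        (0, [::], [::]) [seq v <- enum 'I_n | part v == i].

Definition all_messages : seq ('I_P * seq 'I_n) :=
  flatten [seq (proc_run i).2 | i <- enum 'I_P].

(* contribution to T_j of receiving list X *)
Definition receive_value (j : 'I_P) (X : seq 'I_n) : nat :=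
  \sum_(u <- X | part u == j) inter_size (Nb u) X.

Definition T_final (j : 'I_P) : nat :=
  (proc_run j).1.1 +
  \sum_(m <- all_messages | m.1 == j) receive_value j m.2.

Definition algorithm_T : nat := \sum_(i < P) T_final i.

Definition triangle_count : nat :=
  #|[set t : {set 'I_n} | (#|t| == 3) &&
      [forall u in t, forall v in t, (u != v) ==> e u v]]|.

End Triangles.

From mathcomp Require Import all_boot all_order zify.
Set Implicit Arguments. Unset Strict Implicit. Unset Printing Implicit Defensive.

(* Charge each message N_v sent to processor j with the amount j adds to T_j on
   receiving it.  Then the work of processor i on its vertex v, local additions
   plus charged messages, is sum_(u in N_v) |N_v :&: N_u| whatever the partition:
   every part owning a vertex of N_v other than i receives N_v exactly once, and
   collects exactly the terms for its own vertices u.  Summing over v counts the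
   triples v < u < w (in the order prec) of pairwise adjacent vertices, that is,
   every triangle once, listed in increasing order. *)

Lemma count_mem_uniqC (T : eqType) (X Y : seq T) :
  uniq X -> uniq Y -> count (mem Y) X = count (mem X) Y.
Proof.
move=> X_uniq Y_uniq; rewrite -!size_filter; apply/perm_size/uniq_perm.
- exact: filter_uniq.
- exact: filter_uniq.
- by move=> x; rewrite !mem_filter andbC.
Qed.

Section RankedTriangles.
Variables (T : finType) (e : rel T) (rk : T -> nat).
Hypotheses (e_sym : symmetric e) (rk_inj : injective rk).

Definition ranked_triangle (x : T * T * T) : bool :=
  [&& e x.1.1 x.1.2, e x.1.1 x.2, e x.1.2 x.2,
      rk x.1.1 < rk x.1.2 & rk x.1.2 < rk x.2].

Definition vertex_set (x : T * T * T) : {set T} := [set x.1.1; x.1.2; x.2].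

Lemma mem_vertex_set a b c w :
  (w \in vertex_set (a, b, c)) = [|| w == a, w == b | w == c].
Proof. by rewrite /vertex_set !inE orbA. Qed.

Lemma vertex_set_inj : {in ranked_triangle &, injective vertex_set}.
Proof.
have rank_bounds a b c w : rk a < rk b -> rk b < rk c ->
    w \in vertex_set (a, b, c) -> rk a <= rk w <= rk c.
  by move=> ab bc; rewrite mem_vertex_set => /or3P[] /eqP->; lia.
have vertices_in a b c : [/\ a \in vertex_set (a, b, c),
    b \in vertex_set (a, b, c) & c \in vertex_set (a, b, c)].
  by rewrite !mem_vertex_set !eqxx !orbT.
move=> [[a b] c] [[a' b'] c'] /and5P[_ _ _ /= ab bc] /and5P[_ _ _ /= ab' bc'] E.
have [a_in b_in c_in] := vertices_in a b c.
have [a'_in _ c'_in] := vertices_in a' b' c'.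
rewrite E in a_in b_in c_in; rewrite -E in a'_in c'_in.
have /rk_inj ea : rk a = rk a'.
  by have := rank_bounds _ _ _ _ ab bc a'_in; have := rank_bounds _ _ _ _ ab' bc' a_in; lia.
have /rk_inj ec : rk c = rk c'.
  by have := rank_bounds _ _ _ _ ab bc c'_in; have := rank_bounds _ _ _ _ ab' bc' c_in; lia.
subst a' c'; move: b_in; rewrite mem_vertex_set => /or3P[] /eqP eb; subst b => //; lia.
Qed.

Lemma vertex_set_clique a b c :
  e a b -> e a c -> e b c -> [forall u in vertex_set (a, b, c),
    forall v in vertex_set (a, b, c), (u != v) ==> e u v].
Proof.
move=> ab ac bc; apply/forall_inP => u u_in; apply/forall_inP => v v_in.
apply/implyP; move: u_in v_in; rewrite !mem_vertex_set.
by move=> /or3P[] /eqP-> /or3P[] /eqP->; rewrite ?eqxx // e_sym.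
Qed.

Lemma card_vertex_set x : ranked_triangle x -> #|vertex_set x| = 3.
Proof.
case: x => [[a b] c] /and5P[_ _ _ /= ab bc].
rewrite /vertex_set /= -setUA cardsU1 cards2 !inE; apply/eqP.
by rewrite -!(inj_eq rk_inj) /= (ltn_eqF ab) (ltn_eqF bc) (ltn_eqF (ltn_trans ab bc)).
Qed.

Lemma clique3_ranked (t : {set T}) : #|t| = 3 ->
  [forall u in t, forall v in t, (u != v) ==> e u v] ->
  exists2 x, ranked_triangle x & t = vertex_set x.
Proof.
move=> t3 t_clique.
have adj u v : u \in t -> v \in t -> u != v -> e u v.
  by move=> u_in v_in; move/forall_inP/(_ u u_in)/forall_inP/(_ v v_in)/implyP: t_clique.
pose s := sort (fun u v => rk u <= rk v) (enum t).
have s_sorted : sorted (fun u v => rk u <= rk v) s.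
  by apply: sort_sorted => u v; exact: leq_total.
have s_perm : perm_eq s (enum t) by rewrite perm_sort.
have s_uniq : uniq s by rewrite (perm_uniq s_perm) enum_uniq.
have s_mem : s =i t by move=> u; rewrite (perm_mem s_perm) mem_enum.
have : size s = 3 by rewrite (perm_size s_perm) -cardE.
move: s s_sorted s_uniq s_mem {s_perm} => [|a [|b [|c [|]]]] //=.
rewrite !inE !negb_or => /and3P[ab bc _] /and3P[/andP[a_b a_c] b_c _] s_mem _.
have [a_in b_in c_in] : [/\ a \in t, b \in t & c \in t].
  by rewrite -!s_mem !inE !eqxx !orbT.
exists (a, b, c).
  rewrite /ranked_triangle /= !adj //.
  by move: a_b b_c; rewrite -!(inj_eq rk_inj); lia.
by apply/setP => u; rewrite -s_mem !inE orbA.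
Qed.

Lemma card_ranked_triangles :
  #|[set x | ranked_triangle x]| =
  #|[set t : {set T} | (#|t| == 3) &&
      [forall u in t, forall v in t, (u != v) ==> e u v]]|.
Proof.
have vs_inj : {in [set x | ranked_triangle x] &, injective vertex_set}.
  by move=> x y; rewrite !inE; exact: vertex_set_inj.
rewrite -(card_in_imset vs_inj); apply: eq_card => t; rewrite inE.
apply/imsetP/andP => [[[[a b] c]]|[/eqP t3 t_clique]].
  rewrite inE => abc ->; split; first by rewrite card_vertex_set.
  by case/and5P: abc => ab ac bc _ _; exact: vertex_set_clique.
by have [x x_tri ->] := clique3_ranked t3 t_clique; exists x; rewrite ?inE.
Qed.

End RankedTriangles.

Section Algorithm.
Variables (n P : nat) (e : rel 'I_n) (part : 'I_n -> 'I_P).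

(* The lexicographic order on (deg v, v), flattened to nat using v < n. *)
Definition rank (v : 'I_n) : nat := deg e v * n + v.

Lemma rank_inj : injective rank.
Proof.
have rank_mod v : rank v %% n = v by rewrite /rank modnMDl modn_small.
by move=> u v /(congr1 (modn^~ n)); rewrite !rank_mod => /val_inj.
Qed.

Lemma precE u v : prec e u v = (rank u < rank v).
Proof.
rewrite /prec /rank; have := ltn_ord u; have := ltn_ord v.
case: (ltngtP (deg e u) (deg e v)) => [lt_deg|lt_deg|->] u_lt v_lt /=.
- have : (deg e u).+1 * n <= deg e v * n by rewrite leq_mul2r lt_deg orbT.
  rewrite mulSn; lia.
- have : (deg e v).+1 * n <= deg e u * n by rewrite leq_mul2r lt_deg orbT.
  rewrite mulSn; lia.
- by rewrite ltn_add2l.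
Qed.

Lemma mem_Nb v u : (u \in Nb e v) = e v u && (rank v < rank u).
Proof. by rewrite mem_filter mem_enum andbT precE. Qed.

Lemma Nb_uniq v : uniq (Nb e v).
Proof. exact/filter_uniq/enum_uniq. Qed.

Lemma inter_sizeC v u : inter_size (Nb e v) (Nb e u) = inter_size (Nb e u) (Nb e v).
Proof. exact/count_mem_uniqC/Nb_uniq/Nb_uniq. Qed.

Definition triangles_from (v : 'I_n) : nat :=
  \sum_(u <- Nb e v) inter_size (Nb e v) (Nb e u).

(* T_i plus what the messages in the outbox will add at their receivers. *)
Definition state_value (st : pstate n P) : nat :=
  st.1.1 + \sum_(m <- st.2) receive_value e part m.1 m.2.

Lemma proc_steps_sent i v us st p : p.1 != v ->
  (p \in (foldl (proc_step e part i v) st us).1.2) = (p \in st.1.2).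
Proof.
move=> pv; elim: us st => [|u us IH] [[T sent] out] //=.
rewrite IH /proc_step; case: ifP => // _; case: ifP => //= _.
by rewrite inE; case: eqP => // p_eq; rewrite p_eq eqxx in pv.
Qed.

(* A part j <> i is still owed N_v iff it owns some vertex u yet to be scanned
   and (v, j) has not been recorded as sent. *)
Lemma proc_steps_value i v us st :
  state_value (foldl (proc_step e part i v) st us) =
  state_value st + \sum_(u <- us | part u == i) inter_size (Nb e v) (Nb e u)
  + \sum_(j | [&& j != i, has (fun u => part u == j) us & (v, j) \notin st.1.2])
      receive_value e part j (Nb e v).
Proof.
elim: us st => [|u us IH] [[T sent] out] /=.
  by rewrite big_nil big_pred0 ?addn0 // => j; rewrite andbF.
rewrite IH /proc_step big_cons.
have [<-|part_u] := eqVneq (part u) i.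
  rewrite /state_value /=; congr (_ + _); first lia.
  by apply: eq_bigl => j; rewrite [part u == j]eq_sym; case: eqP.
case: ifP => [sent_u|fresh_u].
  congr (_ + _); apply: eq_bigl => j; case: (eqVneq (part u) j) => [<-|//].
  by rewrite /= sent_u /= !andbF.
rewrite [in RHS](bigD1 (part u)) /=; last by rewrite part_u eqxx fresh_u.
have fresh_pred j : [&& j != i, has (fun u => part u == j) us
              & (v, j) \notin (v, part u) :: sent] =
            [&& j != i, (part u == j) || has (fun u => part u == j) us
              & (v, j) \notin sent] && (j != part u).
  rewrite inE xpair_eqE eqxx /= [part u == j]eq_sym.
  by case: (eqVneq j (part u)) => [->|] /=; rewrite ?andbF ?andbT.
rewrite (eq_bigl _ _ fresh_pred) /state_value big_cons /=.
by rewrite (addnC (receive_value _ _ _ _)) -!addnA [receive_value _ _ _ _ + _]addnCA.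
Qed.

Lemma receive_value_Nb j v : receive_value e part j (Nb e v) =
  \sum_(u <- Nb e v | part u == j) inter_size (Nb e v) (Nb e u).
Proof. by apply: eq_bigr => u _; rewrite inter_sizeC. Qed.

Lemma proc_vertex_value i v (st : pstate n P) :
  (forall j : 'I_P, (v, j) \notin st.1.2) ->
  state_value (foldl (proc_step e part i v) st (Nb e v)) = state_value st + triangles_from v.
Proof.
move=> v_unsent; rewrite proc_steps_value -addnA; congr (_ + _).
rewrite (eq_bigl (fun j => (j != i) && has (fun u => part u == j) (Nb e v))); last first.
  by move=> j /=; move/negPf: (v_unsent j) => ->; rewrite andbT.
rewrite (eq_bigr _ (fun j _ => receive_value_Nb j v)).
have drop_has : \sum_(j | (j != i) && has (fun u => part u == j) (Nb e v))
    \sum_(u <- Nb e v | part u == j) inter_size (Nb e v) (Nb e u) =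
  \sum_(j | j != i) \sum_(u <- Nb e v | part u == j) inter_size (Nb e v) (Nb e u).
  rewrite [RHS](bigID (fun j => has (fun u => part u == j) (Nb e v))) /=.
  by rewrite [X in _ = _ + X]big1 ?addn0 // => j /andP[_]; exact: big_hasC.
by rewrite drop_has /triangles_from [RHS](partition_big part xpredT) // [in RHS](bigD1 i).
Qed.

Lemma proc_loop_value i vs (st : pstate n P) : uniq vs ->
  (forall v (j : 'I_P), v \in vs -> (v, j) \notin st.1.2) ->
  state_value (foldl (fun st v => foldl (proc_step e part i v) st (Nb e v)) st vs) =
  state_value st + \sum_(v <- vs) triangles_from v.
Proof.
elim: vs st => [|v vs IH] st /=; first by rewrite big_nil addn0.
move=> /andP[v_notin vs_uniq] unsent.
rewrite IH // => [|w j w_in].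
  by rewrite proc_vertex_value => [|j]; rewrite ?big_cons ?addnA // unsent ?mem_head.
rewrite proc_steps_sent; first by rewrite unsent // inE w_in orbT.
by apply: contraNneq v_notin => <-.
Qed.

Lemma proc_run_value i :
  state_value (proc_run e part i) = \sum_(v | part v == i) triangles_from v.
Proof.
rewrite /proc_run proc_loop_value //; last exact: filter_uniq (enum_uniq _).
by rewrite /state_value big_nil big_filter big_enum_cond.
Qed.

Lemma algorithm_T_by_processor : algorithm_T e part = \sum_i state_value (proc_run e part i).
Proof.
rewrite /algorithm_T /T_final big_split /= [in RHS]big_split /=; congr (_ + _).
transitivity (\sum_(m <- all_messages e part) receive_value e part m.1 m.2).
  rewrite [RHS](partition_big fst xpredT) //; apply: eq_bigr => j _.
  by apply: eq_big => [//|m /eqP <-].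
by rewrite big_flatten big_map big_enum.
Qed.

Lemma sum_triangles_from :
  \sum_v triangles_from v = #|[set x | ranked_triangle e rank x]|.
Proof.
rewrite /triangles_from /inter_size.
under eq_bigr => v _ do
  under eq_bigr => u _ do rewrite -sum1_count big_filter_cond big_enum_cond /=.
under eq_bigr => v _ do rewrite big_filter big_enum_cond /=.
rewrite pair_big_dep pair_big_dep sum1dep_card; apply: eq_card => -[[v u] w].
rewrite !inE /ranked_triangle /= mem_Nb !precE; lia.
Qed.

End Algorithm.

Theorem theorem1 (n P : nat) (e : rel 'I_n) (part : 'I_n -> 'I_P) :
  simple_graph e -> 0 < P -> consecutive_parts part ->
  algorithm_T e part = triangle_count e.
Proof.
move=> [e_sym _] _ _.
rewrite /triangle_count -(card_ranked_triangles e_sym (@rank_inj n e)).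
rewrite -sum_triangles_from algorithm_T_by_processor [RHS](partition_big part xpredT) //.
by apply: eq_bigr => i _; rewrite proc_run_value.
Qed.
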